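(* Let $\Omega$ be an open subset of $\mathbb{H}$ such that, for every $I\in\mathbb{S}$, $\Omega_I=\Omega\cap L_I$ is an angle $\{re^{I(\zeta_I+\vartheta)}: r>0,\ |\vartheta|<\varphi_I/2\}$ with $\zeta_I\in\mathbb{R}$ and $0<\varphi_I<2\pi$. If the maps $\mathbb{S}\to\mathbb{R}$, $I\mapsto\zeta_I$ and $I\mapsto\varphi_I$ are continuous, then $\Omega$ is a slice domain.
   Context: $\mathbb{H}$ denotes the quaternions; $\mathbb{S}=\{ix_1+jx_2+kx_3: x_1^2+x_2^2+x_3^2=1\}$ (a 2-sphere); for $I\in\mathbb{S}$, $L_I=\mathbb{R}+\mathbb{R}I$ and $e^{I\vartheta}=\cos\vartheta+I\sin\vartheta$. A domain $\Omega\subseteq\mathbb{H}$ is a slice domain if $\Omega\cap\mathbb{R}\ne\emptyset$ and $\Omega\cap L_I$ is a domain (open connected set) in $L_I$ for every $I\in\mathbb{S}$. (Here ''slice domain'' is understood to include that $\Omega$ is a domain.) *)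

From Stdlib Require Import Reals.
Open Scope R_scope.

(* Quaternions q = q0 + i q1 + j q2 + k q3 (only the real vector-space
   structure and the Euclidean metric are needed here). *)
Record quat : Type := mkH { q0 : R; q1 : R; q2 : R; q3 : R }.

Definition qadd (p q : quat) : quat :=
  mkH (q0 p + q0 q) (q1 p + q1 q) (q2 p + q2 q) (q3 p + q3 q).
Definition qscal (a : R) (q : quat) : quat :=
  mkH (a * q0 q) (a * q1 q) (a * q2 q) (a * q3 q).
Definition qreal (a : R) : quat := mkH a 0 0 0.

Definition qdist (p q : quat) : R :=
  sqrt ((q0 p - q0 q)^2 + (q1 p - q1 q)^2 + (q2 p - q2 q)^2 + (q3 p - q3 q)^2).

Definition in_S (I : quat) : Prop :=
  q0 I = 0 /\ q1 I ^ 2 + q2 I ^ 2 + q3 I ^ 2 = 1.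

Definition L (I : quat) (q : quat) : Prop :=
  exists a b : R, q = qadd (qreal a) (qscal b I).

(* r e^{I t} = r cos t + r sin t I *)
Definition rexpI (r : R) (I : quat) (t : R) : quat :=
  qadd (qreal (r * cos t)) (qscal (r * sin t) I).

Definition is_real_q (q : quat) : Prop := q1 q = 0 /\ q2 q = 0 /\ q3 q = 0.

Definition open_H (A : quat -> Prop) : Prop :=
  forall q, A q -> exists eps, 0 < eps /\ forall p, qdist p q < eps -> A p.

Definition open_in (X A : quat -> Prop) : Prop :=
  (forall q, A q -> X q) /\
  forall q, A q -> exists eps, 0 < eps /\
    forall p, X p -> qdist p q < eps -> A p.

Definition connected_H (A : quat -> Prop) : Prop :=
  forall U V : quat -> Prop, open_H U -> open_H V ->
    (forall q, A q -> U q \/ V q) ->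
    (forall q, A q -> U q -> V q -> False) ->
    (exists q, A q /\ U q) -> (exists q, A q /\ V q) -> False.

Definition domain_H (A : quat -> Prop) : Prop := open_H A /\ connected_H A.

Definition domain_in_L (I : quat) (A : quat -> Prop) : Prop :=
  open_in (L I) (fun q => A q /\ L I q) /\ connected_H (fun q => A q /\ L I q).

Definition slice_domain (Omega : quat -> Prop) : Prop :=
  domain_H Omega /\
  (exists q, Omega q /\ is_real_q q) /\
  (forall I, in_S I -> domain_in_L I Omega).

Definition continuous_on_S (f : quat -> R) : Prop :=
  forall I, in_S I -> forall eps, 0 < eps -> exists delta, 0 < delta /\
    forall J, in_S J -> qdist J I < delta -> Rabs (f J - f I) < eps.

(* Proof outline.
   - Each slice Ω ∩ L_I is an angle {r e^{I(ζ_I+t)} : r > 0, |t| < φ_I/2}; it is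
     path-connected (interpolate linearly in r and t), hence connected, and it
     is relatively open in L_I because Ω is open.
   - Ω meets the real axis.  Otherwise sin(ζ_J + t) never vanishes on the
     angle of J, so by the intermediate value theorem it has the sign of
     sin ζ_J.  The slices L_I and L_{-I} coincide while sin changes sign under
     I ↦ -I, so sin ζ_I and sin ζ_{-I} have opposite signs; along the half
     great circle from i to -i the continuous function J ↦ sin ζ_J must then
     vanish, which is impossible.
   - Every quaternion lies in some slice and every real point lies in all of
     them, so Ω is a union of connected sets through a common real point and
     is therefore connected. *)

From Stdlib Require Import Reals.
Open Scope R_scope.
From Stdlib Require Import Lra Classical.

Lemma continuity_eps_delta (f : R -> R) : continuity f ->
  forall x eps, 0 < eps ->
  exists d, 0 < d /\ forall y, Rabs (y - x) < d -> Rabs (f y - f x) < eps.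
Proof.
  intros Hc x eps He. destruct (Hc x eps He) as [d [Hd H]].
  exists d; split; [lra|]. intros y Hy.
  destruct (Req_dec y x) as [->|Hne].
  - unfold Rminus; rewrite Rplus_opp_r, Rabs_R0; lra.
  - apply (H y). repeat split; auto.
Qed.

Lemma no_zero_same_sign (f : R -> R) : continuity f ->
  (forall s, 0 <= s <= 1 -> f s <> 0) -> f 0 * f 1 > 0.
Proof.
  intros Cf Hnz. apply Rnot_le_lt. intro Hle.
  destruct (IVT_cor f 0 1 Cf ltac:(lra) Hle) as [s [Hs Hfs]].
  exact (Hnz s Hs Hfs).
Qed.

Lemma qdist_lt_of_coords p q e : 0 < e ->
  Rabs (q0 p - q0 q) < e/2 -> Rabs (q1 p - q1 q) < e/2 ->
  Rabs (q2 p - q2 q) < e/2 -> Rabs (q3 p - q3 q) < e/2 -> qdist p q < e.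
Proof.
  intros He H0 H1 H2 H3. unfold qdist.
  rewrite <- (sqrt_pow2 e) by lra.
  apply sqrt_lt_1_alt.
  set (a := q0 p - q0 q) in *. set (b := q1 p - q1 q) in *.
  set (c := q2 p - q2 q) in *. set (d := q3 p - q3 q) in *.
  rewrite <- (pow2_abs a), <- (pow2_abs b), <- (pow2_abs c), <- (pow2_abs d).
  pose proof (Rabs_pos a). pose proof (Rabs_pos b).
  pose proof (Rabs_pos c). pose proof (Rabs_pos d).
  split; nra.
Qed.

Definition qcurve_continuous (g : R -> quat) : Prop :=
  continuity (fun s => q0 (g s)) /\ continuity (fun s => q1 (g s)) /\
  continuity (fun s => q2 (g s)) /\ continuity (fun s => q3 (g s)).

Lemma qcurve_eps_delta g : qcurve_continuous g -> forall t eps, 0 < eps ->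
  exists d, 0 < d /\ forall s, Rabs (s - t) < d -> qdist (g s) (g t) < eps.
Proof.
  intros [C0 [C1 [C2 C3]]] t eps He.
  assert (He2 : 0 < eps/2) by lra.
  destruct (continuity_eps_delta _ C0 t _ He2) as [d0 [Hd0 E0]].
  destruct (continuity_eps_delta _ C1 t _ He2) as [d1 [Hd1 E1]].
  destruct (continuity_eps_delta _ C2 t _ He2) as [d2 [Hd2 E2]].
  destruct (continuity_eps_delta _ C3 t _ He2) as [d3 [Hd3 E3]].
  exists (Rmin (Rmin d0 d1) (Rmin d2 d3)). split.
  - repeat apply Rmin_pos; auto.
  - intros s Hs.
    pose proof (Rmin_l (Rmin d0 d1) (Rmin d2 d3)).
    pose proof (Rmin_r (Rmin d0 d1) (Rmin d2 d3)).
    pose proof (Rmin_l d0 d1). pose proof (Rmin_r d0 d1).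
    pose proof (Rmin_l d2 d3). pose proof (Rmin_r d2 d3).
    apply qdist_lt_of_coords; auto;
      [apply E0 | apply E1 | apply E2 | apply E3]; lra.
Qed.

Lemma continuous_on_S_along_curve (f : quat -> R) (g : R -> quat) :
  continuous_on_S f -> qcurve_continuous g -> (forall s, in_S (g s)) ->
  continuity (fun s => f (g s)).
Proof.
  intros Hf Cg HgS t eps He.
  destruct (Hf (g t) (HgS t) eps He) as [d [Hd Hfd]].
  destruct (qcurve_eps_delta g Cg t d Hd) as [d' [Hd' Hgd]].
  exists d'; split; [lra|]. intros s [_ Hs].
  apply Hfd; [apply HgS | apply Hgd, Hs].
Qed.

(* Path-connected subsets of H are connected: the supremum c of the times up
   to which a path from U stays in U can lie neither in U nor in V. *)
Lemma path_connected_connected (A : quat -> Prop) :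
  (forall p q, A p -> A q -> exists g, qcurve_continuous g /\ g 0 = p /\
     g 1 = q /\ forall s, 0 <= s <= 1 -> A (g s)) -> connected_H A.
Proof.
  intros Hpath U V HU HV Hcov Hdis [p [Ap Up]] [q [Aq Vq]].
  destruct (Hpath p q Ap Aq) as [g [Cg [G0 [G1 GA]]]].
  set (E := fun t => 0 <= t <= 1 /\ forall s, 0 <= s <= t -> U (g s)).
  assert (Hb : bound E) by (exists 1; intros t [Ht _]; lra).
  assert (E0 : E 0).
  { split; [lra|]. intros s Hs. replace s with 0 by lra. rewrite G0; auto. }
  destruct (completeness E Hb (ex_intro _ 0 E0)) as [c [Hub Hlub]].
  assert (c0 : 0 <= c) by (apply Hub; auto).
  assert (c1 : c <= 1) by (apply Hlub; intros t [Ht _]; lra).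
  assert (below_c : forall s, s < c -> exists t, E t /\ s < t).
  { intros s Hs. apply NNPP; intro Hn. assert (c <= s); [|lra].
    apply Hlub. intros t Et. apply Rnot_lt_le. intro Hst. apply Hn. eauto. }
  destruct (Hcov (g c) (GA c (conj c0 c1))) as [Uc|Vc].
  - (* g c ∈ U: either c = 1 and q ∈ U, or E extends beyond c *)
    destruct (HU _ Uc) as [eps [Heps HUe]].
    destruct (qcurve_eps_delta g Cg c eps Heps) as [d [Hd Hgd]].
    destruct (Req_dec c 1) as [Hc1|Hc1].
    + apply (Hdis q); auto. rewrite <- G1, <- Hc1; auto.
    + set (c' := Rmin 1 (c + d/2)).
      assert (Hc' : c < c' /\ c' <= 1 /\ c' <= c + d/2).
      { unfold c'; split; [apply Rmin_glb_lt; lra|].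
        split; [apply Rmin_l|apply Rmin_r]. }
      assert (E c').
      { split; [lra|]. intros s Hs.
        destruct (Rlt_or_le s c) as [Hsc|Hsc].
        - destruct (below_c s Hsc) as [t [[_ Et] Hst]]. apply Et; lra.
        - apply HUe, Hgd. rewrite Rabs_right; lra. }
      assert (c' <= c) by (apply Hub; auto). lra.
  - (* g c ∈ V: points of E just below c are mapped into U ∩ V *)
    destruct (HV _ Vc) as [eps [Heps HVe]].
    destruct (qcurve_eps_delta g Cg c eps Heps) as [d [Hd Hgd]].
    destruct (below_c (c - d) ltac:(lra)) as [t [[Ht Et] Htd]].
    assert (t <= c) by (apply Hub; split; auto).
    apply (Hdis (g t)); [apply GA; lra | apply Et; lra |].
    apply HVe, Hgd. rewrite Rabs_left1; lra.
Qed.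

Lemma connected_through_point (A : quat -> Prop) x :
  A x ->
  (forall q, A q -> exists B, connected_H B /\ (forall y, B y -> A y) /\
     B x /\ B q) ->
  connected_H A.
Proof.
  intros Ax HB U V HU HV Hcov Hdis [p [Ap Up]] [q [Aq Vq]].
  destruct (Hcov x Ax) as [Ux|Vx].
  - destruct (HB q Aq) as [B [CB [BA [Bx Bq]]]].
    apply (CB U V HU HV); eauto.
  - destruct (HB p Ap) as [B [CB [BA [Bx Bp]]]].
    apply (CB U V HU HV); eauto.
Qed.

Lemma Rabs_convex_lt x y a s : 0 <= s <= 1 ->
  Rabs x < a -> Rabs y < a -> Rabs (x + s * (y - x)) < a.
Proof.
  intros Hs Hx Hy. apply Rabs_def2 in Hx. apply Rabs_def2 in Hy.
  destruct (Req_dec s 0) as [->|Hs0].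
  - apply Rabs_def1; lra.
  - assert (0 <= (1 - s) * (a - x)) by (apply Rmult_le_pos; lra).
    assert (0 <= (1 - s) * (a + x)) by (apply Rmult_le_pos; lra).
    assert (0 < s * (a - y)) by (apply Rmult_lt_0_compat; lra).
    assert (0 < s * (a + y)) by (apply Rmult_lt_0_compat; lra).
    apply Rabs_def1; nra.
Qed.

Lemma angle_connected (A : quat -> Prop) I z a :
  (forall q, A q <-> exists r t, 0 < r /\ Rabs t < a /\ q = rexpI r I (z + t)) ->
  connected_H A.
Proof.
  intros HA. apply path_connected_connected. intros p q Ap Aq.
  destruct (proj1 (HA p) Ap) as [r1 [t1 [Hr1 [Ht1 ->]]]].
  destruct (proj1 (HA q) Aq) as [r2 [t2 [Hr2 [Ht2 ->]]]].
  exists (fun s => rexpI (r1 + s * (r2 - r1)) I (z + (t1 + s * (t2 - t1)))).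
  split; [|split; [|split]].
  - unfold qcurve_continuous, rexpI, qadd, qreal, qscal; simpl.
    repeat split; reg.
  - f_equal; f_equal; ring.
  - f_equal; f_equal; ring.
  - intros s Hs. apply HA. exists (r1 + s * (r2 - r1)), (t1 + s * (t2 - t1)).
    repeat split; [nra | apply Rabs_convex_lt; auto].
Qed.

Lemma open_in_of_open (X A : quat -> Prop) :
  open_H A -> open_in X (fun q => A q /\ X q).
Proof.
  intros HA. split; [intros q [_ Xq]; exact Xq|].
  intros q [Aq _]. destruct (HA q Aq) as [eps [He Heps]].
  exists eps; split; auto.
Qed.

Definition qneg (I : quat) : quat := mkH (q0 I) (- q1 I) (- q2 I) (- q3 I).

Lemma in_S_qneg I : in_S I -> in_S (qneg I).
Proof. unfold in_S, qneg; simpl. intros [H1 H2]. split; [auto|]. nra. Qed.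

Lemma L_qneg I q : in_S I -> L I q -> L (qneg I) q.
Proof.
  intros [HI _] [a [b ->]]. exists a, (-b).
  unfold qadd, qreal, qscal, qneg; simpl. rewrite HI. f_equal; ring.
Qed.

Lemma real_in_L I x : is_real_q x -> L I x.
Proof.
  intros [H1 [H2 H3]]. exists (q0 x), 0.
  destruct x as [a b c d]; simpl in *; subst.
  unfold qadd, qreal, qscal; simpl. f_equal; ring.
Qed.

Lemma slices_cover q : exists I, in_S I /\ L I q.
Proof.
  destruct q as [a b c d].
  destruct (Req_dec (b^2 + c^2 + d^2) 0) as [H0|H0].
  - exists (mkH 0 1 0 0). split; [unfold in_S; simpl; split; [auto|ring]|].
    exists a, 0. unfold qadd, qreal, qscal; simpl.
    assert (b = 0) by nra. assert (c = 0) by nra. assert (d = 0) by nra. subst.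
    f_equal; ring.
  - assert (Hp : 0 < b^2 + c^2 + d^2) by (assert (0 <= b^2+c^2+d^2) by nra; lra).
    set (n := sqrt (b^2 + c^2 + d^2)).
    assert (Hn : 0 < n) by (apply sqrt_lt_R0; auto).
    assert (Hn2 : n * n = b^2 + c^2 + d^2) by (apply sqrt_sqrt; lra).
    exists (mkH 0 (b/n) (c/n) (d/n)). split.
    + unfold in_S; simpl. split; [auto|]. field_simplify; [|lra].
      rewrite <- Hn2. field. lra.
    + exists a, n. unfold qadd, qreal, qscal; simpl. f_equal; field; lra.
Qed.

Lemma rexpI_imag r J t k :
  (k = q1 \/ k = q2 \/ k = q3) -> k (rexpI r J t) = r * sin t * k J.
Proof.
  intros [H | [H | H]]; subst k; unfold rexpI, qadd, qreal, qscal; simpl; ring.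
Qed.

Definition half_circle (t : R) : quat := mkH 0 (cos (PI * t)) (sin (PI * t)) 0.

Lemma half_circle_in_S t : in_S (half_circle t).
Proof.
  unfold in_S, half_circle; simpl. split; [auto|].
  pose proof (sin2_cos2 (PI * t)). unfold Rsqr in *. nra.
Qed.

Lemma half_circle_continuous : qcurve_continuous half_circle.
Proof. unfold qcurve_continuous, half_circle; simpl; repeat split; reg. Qed.

Section RealPoint.

Variables (Omega : quat -> Prop) (zeta phi : quat -> R).
Hypothesis slice_angle : forall I, in_S I ->
  0 < phi I < 2 * PI /\
  (forall q, (Omega q /\ L I q) <->
     exists r t, 0 < r /\ Rabs t < phi I / 2 /\ q = rexpI r I (zeta I + t)).
Hypothesis zeta_continuous : continuous_on_S zeta.
Hypothesis no_real_point : ~ exists q, Omega q /\ is_real_q q.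

Lemma angle_in_Omega J r u : in_S J -> 0 < r -> Rabs u < phi J / 2 ->
  Omega (rexpI r J (zeta J + u)).
Proof. intros HJ Hr Hu. apply (proj2 (slice_angle J HJ)). exists r, u; auto. Qed.

(* Without real points, the angle of J never reaches the real axis. *)
Lemma sin_angle_nonzero J u : in_S J -> Rabs u < phi J / 2 ->
  sin (zeta J + u) <> 0.
Proof.
  intros HJ Hu Hs. apply no_real_point.
  exists (rexpI 1 J (zeta J + u)). split; [apply angle_in_Omega; auto; lra|].
  unfold is_real_q. rewrite !rexpI_imag by auto. rewrite Hs.
  repeat split; ring.
Qed.

Lemma sin_zeta_nonzero J : in_S J -> sin (zeta J) <> 0.
Proof.
  intros HJ. rewrite <- (Rplus_0_r (zeta J)). apply sin_angle_nonzero; auto.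
  destruct (slice_angle J HJ) as [[Hp _] _]. rewrite Rabs_R0; lra.
Qed.

Lemma sin_angle_sign J t : in_S J -> Rabs t < phi J / 2 ->
  sin (zeta J) * sin (zeta J + t) > 0.
Proof.
  intros HJ Ht.
  pose proof (no_zero_same_sign (fun s => sin (zeta J + s * t))) as Hsign.
  cbv beta in Hsign. rewrite Rmult_0_l, Rplus_0_r, Rmult_1_l in Hsign.
  apply Hsign; [reg|].
  intros s Hs. apply sin_angle_nonzero; auto.
  rewrite Rabs_mult, (Rabs_right s) by lra.
  pose proof (Rabs_pos t). nra.
Qed.

(* The point e^{I ζ_I} also lies in the angle of -I, where it has imaginary
   part of the opposite orientation: sin ζ_I and sin ζ_{-I} differ in sign. *)
Lemma sin_zeta_qneg I : in_S I -> sin (zeta I) * sin (zeta (qneg I)) < 0.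
Proof.
  intros HI. pose proof (in_S_qneg I HI) as HnI.
  destruct (slice_angle I HI) as [[Hp _] _].
  set (x := rexpI 1 I (zeta I + 0)).
  assert (Ox : Omega x) by (apply angle_in_Omega; [auto | lra | rewrite Rabs_R0; lra]).
  assert (Lx : L I x) by (exists (1 * cos (zeta I + 0)), (1 * sin (zeta I + 0));
                           reflexivity).
  destruct (proj1 (proj2 (slice_angle _ HnI) x) (conj Ox (L_qneg I x HI Lx)))
    as [r [t [Hr [Ht Heq]]]].
  pose proof (sin_angle_sign _ _ HnI Ht) as Hsign.
  unfold x in Heq. rewrite Rplus_0_r in Heq.
  assert (E1 := f_equal q1 Heq). assert (E2 := f_equal q2 Heq).
  assert (E3 := f_equal q3 Heq).
  rewrite !rexpI_imag in E1, E2, E3 by auto. simpl in E1, E2, E3.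
  destruct HI as [_ HI].
  assert (Hrel : sin (zeta I) = - r * sin (zeta (qneg I) + t)).
  { transitivity (sin (zeta I) * (q1 I ^ 2 + q2 I ^ 2 + q3 I ^ 2));
      [rewrite HI; ring|].
    transitivity ((1 * sin (zeta I) * q1 I) * q1 I + (1 * sin (zeta I) * q2 I) * q2 I
                  + (1 * sin (zeta I) * q3 I) * q3 I); [ring|].
    rewrite E1, E2, E3. transitivity (- r * sin (zeta (qneg I) + t)
      * (q1 I ^ 2 + q2 I ^ 2 + q3 I ^ 2)); [ring | rewrite HI; ring]. }
  rewrite Hrel. nra.
Qed.

(* Along the half circle from i to -i, J ↦ sin ζ_J is continuous, nowhere
   zero, yet changes sign: contradiction. *)
Lemma no_real_point_absurd : False.
Proof.
  set (h := fun t => sin (zeta (half_circle t))).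
  assert (Ch : continuity h).
  { intro t. apply (continuity_pt_comp (fun t => zeta (half_circle t)) sin).
    - apply continuous_on_S_along_curve; auto.
      + apply half_circle_continuous.
      + apply half_circle_in_S.
    - apply continuity_sin. }
  assert (Hsign : h 0 * h 1 > 0).
  { apply no_zero_same_sign; auto. intros s _.
    apply sin_zeta_nonzero, half_circle_in_S. }
  assert (H0 : half_circle 0 = mkH 0 1 0 0)
    by (unfold half_circle; rewrite Rmult_0_r, cos_0, sin_0; reflexivity).
  assert (H1 : half_circle 1 = qneg (mkH 0 1 0 0)) by
    (unfold half_circle, qneg; simpl; rewrite Rmult_1_r, cos_PI, sin_PI;
     f_equal; ring).
  pose proof (sin_zeta_qneg (mkH 0 1 0 0)) as Hopp.
  unfold h in Hsign. rewrite H0, H1 in Hsign.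
  assert (in_S (mkH 0 1 0 0)) by (unfold in_S; simpl; split; [auto|ring]).
  specialize (Hopp ltac:(assumption)). lra.
Qed.

End RealPoint.

Theorem proposition4p3 (Omega : quat -> Prop) (zeta phi : quat -> R) :
  open_H Omega ->
  (forall I, in_S I ->
     0 < phi I < 2 * PI /\
     (forall q, (Omega q /\ L I q) <->
        exists r t, 0 < r /\ Rabs t < phi I / 2 /\ q = rexpI r I (zeta I + t))) ->
  continuous_on_S zeta ->
  continuous_on_S phi ->
  slice_domain Omega.
Proof.
  intros Hopen Hangle Hzeta _.
  assert (Hreal : exists x, Omega x /\ is_real_q x).
  { apply NNPP; intro NR. exact (no_real_point_absurd Omega zeta phi Hangle Hzeta NR). }
  assert (Hslice : forall I, in_S I -> connected_H (fun q => Omega q /\ L I q)).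
  { intros I HI. exact (angle_connected _ I _ _ (proj2 (Hangle I HI))). }
  destruct Hreal as [x [Ox Rx]].
  split; [split; [exact Hopen|] | split; [exists x; auto|]].
  - (* Ω is the union of its slices, all of which contain x *)
    apply (connected_through_point _ x Ox). intros q Oq.
    destruct (slices_cover q) as [I [HI LI]].
    exists (fun y => Omega y /\ L I y).
    repeat split; auto; [intros y [Oy _]; exact Oy | apply real_in_L; exact Rx].
  - intros I HI. split; [apply open_in_of_open; exact Hopen | exact (Hslice I HI)].
Qed.
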